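(* Let $G$ be a two-player objective game ($n=2$) and let $(a^*_1,a^*_2)\in A_1\times A_2$ be Pareto efficient with respect to $\pi$. If $(a^*_1,a^*_2)$ is a strict Nash equilibrium of $G$, then $(a^*_1,a^*_2)$ is stable under perfect observability, i.e. there is $\mu\in\mathcal M(\Theta^2)$ and a stable configuration $(\mu,b)$ whose aggregate outcome is the point mass at $(a^*_1,a^*_2)$.
   Context: Objective game: $G=(N,A,\pi)$ is a finite $n$-player normal-form game, $N=\{1,\dots,n\}$, finite action sets $A_i$, $A=\prod_{i\in N}A_i$, material payoff (fitness) functions $\pi_i:A\to\mathbb{R}$, extended multilinearly to mixed profiles in $\prod_{i}\Delta(A_i)$; $\pi=(\pi_1,\dots,\pi_n)$. Preference types: $\Theta=\mathbb{R}^A$ (utility functions on $A$, extended multilinearly to mixed profiles). $\mathcal{M}(\Theta^n)$ is the set of product distributions $\mu=\mu_1\times\dots\times\mu_n$ on $\Theta^n$ with each $\mu_i$ finitely supported; $\operatorname{supp}\mu=\prod_i\operatorname{supp}\mu_i$, $\mu(\theta)=\prod_i\mu_i(\theta_i)$, $\mu_{-i}(\theta_{-i})=\prod_{j\neq i}\mu_j(\theta_j)$. Mutants: for nonempty $J\subseteq N$, a mutant sub-profile is $\tilde\theta_J\in\prod_{j\in J}(\Theta\setminus\operatorname{supp}\mu_j)$ with shares $\varepsilon=(\varepsilon_j)_{j\in J}\in(0,1)^{|J|}$, $\|\varepsilon\|=\max_j\varepsilon_j$; the post-entry distribution $\tilde\mu^\varepsilon$ has $\tilde\mu^\varepsilon_i=(1-\varepsilon_i)\mu_i+\varepsilon_i\delta_{\tilde\theta_i}$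 for $i\in J$ and $\tilde\mu^\varepsilon_i=\mu_i$ otherwise. Perfect observability: for $\mu\in\mathcal M(\Theta^n)$, an equilibrium is a map $b:\operatorname{supp}\mu\to\prod_i\Delta(A_i)$ such that for each $\theta$, $b(\theta)$ is a Nash equilibrium of the normal-form game with action sets $A_i$ and payoffs $\theta_1,\dots,\theta_n$; $B_1(\mu)$ is the set of these; $(\mu,b)$ with $b\in B_1(\mu)$ is a configuration, with aggregate outcome $\varphi_{\mu,b}(a)=\sum_{\theta\in\operatorname{supp}\mu}\mu(\theta)\prod_{i}b_i(\theta)(a_i)$. Average fitness of $\theta_i\in\operatorname{supp}\mu_i$: $\Pi_{\theta_i}(\mu;b)=\sum_{\theta'_{-i}\in\operatorname{supp}\mu_{-i}}\mu_{-i}(\theta'_{-i})\pi_i(b(\theta_i,\theta'_{-i}))$. $(\mu,b)$ is balanced if for each $i$ all types in $\operatorname{supp}\mu_i$ have equal average fitness. Focal set: $B_1(\tilde\mu^\varepsilon;b)=\{\tilde b\in B_1(\tilde\mu^\varepsilon):\tilde b(\theta)=b(\theta)\ \forall\theta\in\operatorname{supp}\mu\}$. $(\mu,b)$ is stable if it is balanced and for every nonempty $J\subseteq N$ and every mutant sub-profile $\tilde\theta_J$ there is $\bar\epsilon\in(0,1)$ such that for every $\varepsilon\in(0,1)^{|J|}$ with $\|\varepsilon\|<\bar\epsilon$ and every $\tilde b\in B_1(\tilde\mu^\varepsilon;b)$, either (i) there is $j\in J$ with $\Pi_{\theta_j}(\tilde\mu^\varepsilon;\tilde b)>\Pi_{\tilde\theta_j}(\tilde\mu^\varepsilon;\tilde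 b)$ for all $\theta_j\in\operatorname{supp}\mu_j$, or (ii) for every $i\in N$ all types in $\operatorname{supp}\tilde\mu^\varepsilon_i$ have equal average fitness under $(\tilde\mu^\varepsilon,\tilde b)$. A profile $\sigma\in\prod_i\Delta(A_i)$ is stable if the product distribution $\varphi_\sigma(a)=\prod_i\sigma_i(a_i)$ is the aggregate outcome of some stable configuration. Pareto notions: $\sigma$ Pareto dominates $\sigma'$ if $\pi_i(\sigma)\ge\pi_i(\sigma')$ for all $i$ with strict inequality for some $i$; $\sigma$ is Pareto efficient if no profile in $\prod_i\Delta(A_i)$ Pareto dominates it. A strict Nash equilibrium $a^*$ satisfies $\pi_i(a^* )>\pi_i(a_i,a^*_{-i})$ for all $i$ and all $a_i\neq a^*_i$. *)

(* Reals are modelled by an arbitrary realFieldType R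
   (the statement is purely order-algebraic; R = ℝ is an instance). *)
From HB Require Import structures.
From mathcomp Require Import all_boot all_order all_algebra.
Set Implicit Arguments. Unset Strict Implicit. Unset Printing Implicit Defensive.
Import Order.TTheory GRing.Theory Num.Theory.
Local Open Scope ring_scope.

Section Game.
Variables (R : realFieldType) (A1 A2 : finType).

Definition is_mixed (A : finType) (s : {ffun A -> R}) : Prop :=
  (forall a, 0 <= s a) /\ \sum_(a : A) s a = 1.

Definition dirac (A : finType) (a0 : A) : {ffun A -> R} :=
  [ffun a => if a == a0 then 1 else 0].

Definition ext (u : A1 * A2 -> R) (s1 : {ffun A1 -> R}) (s2 : {ffun A2 -> R}) : R :=
  \sum_(x1 : A1) \sum_(x2 : A2) s1 x1 * s2 x2 * u (x1, x2).

Definition Theta := {ffun A1 * A2 -> R}.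

Definition profile := ({ffun A1 -> R} * {ffun A2 -> R})%type.

Definition nash (th1 th2 : A1 * A2 -> R) (s : profile) : Prop :=
  is_mixed s.1 /\ is_mixed s.2 /\
  (forall t1, is_mixed t1 -> ext th1 t1 s.2 <= ext th1 s.1 s.2) /\
  (forall t2, is_mixed t2 -> ext th2 s.1 t2 <= ext th2 s.1 s.2).

Record dist := Dist { dsupp : seq Theta; dwt : Theta -> R }.

Definition valid_dist (d : dist) : Prop :=
  uniq (dsupp d) /\ (forall t, t \in dsupp d -> 0 < dwt d t) /\
  \sum_(t <- dsupp d) dwt d t = 1.

(* post-entry distribution (1-e) d + e δ_m (m ∉ supp d) *)
Definition entry (m : Theta) (e : R) (d : dist) : dist :=
  Dist (m :: dsupp d) (fun t => if t == m then e else (1 - e) * dwt d t).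

Definition entry_opt (m : option Theta) (e : R) (d : dist) : dist :=
  match m with None => d | Some t => entry t e d end.

(* strategy map b : supp μ -> profiles (values off the support are irrelevant) *)
Definition strat := Theta -> Theta -> profile.

Definition is_equilibrium (d1 d2 : dist) (b : strat) : Prop :=
  forall t1 t2, t1 \in dsupp d1 -> t2 \in dsupp d2 -> nash t1 t2 (b t1 t2).

Definition aggregate (d1 d2 : dist) (b : strat) (a : A1 * A2) : R :=
  \sum_(t1 <- dsupp d1) \sum_(t2 <- dsupp d2)
     dwt d1 t1 * dwt d2 t2 * (b t1 t2).1 a.1 * (b t1 t2).2 a.2.

Variables (pi1 pi2 : A1 * A2 -> R).

Definition fit1 (d1 d2 : dist) (b : strat) (t1 : Theta) : R :=
  \sum_(t2 <- dsupp d2) dwt d2 t2 * ext pi1 (b t1 t2).1 (b t1 t2).2.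
Definition fit2 (d1 d2 : dist) (b : strat) (t2 : Theta) : R :=
  \sum_(t1 <- dsupp d1) dwt d1 t1 * ext pi2 (b t1 t2).1 (b t1 t2).2.

Definition balanced (d1 d2 : dist) (b : strat) : Prop :=
  (forall t t', t \in dsupp d1 -> t' \in dsupp d1 -> fit1 d1 d2 b t = fit1 d1 d2 b t') /\
  (forall t t', t \in dsupp d2 -> t' \in dsupp d2 -> fit2 d1 d2 b t = fit2 d1 d2 b t').

Definition focal (d1 d2 : dist) (b : strat) (e1 e2 : dist) (bt : strat) : Prop :=
  is_equilibrium e1 e2 bt /\
  (forall t1 t2, t1 \in dsupp d1 -> t2 \in dsupp d2 -> bt t1 t2 = b t1 t2).

(* The mutant set J ⊆ {1,2} is encoded by m1, m2 : option Theta
   (Some t = player i ∈ J with mutant type t), not both None. *)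
Definition stable (d1 d2 : dist) (b : strat) : Prop :=
  balanced d1 d2 b /\
  forall m1 m2 : option Theta,
    (m1 <> None \/ m2 <> None) ->
    (forall t, m1 = Some t -> t \notin dsupp d1) ->
    (forall t, m2 = Some t -> t \notin dsupp d2) ->
    exists eb : R, 0 < eb < 1 /\
      forall e1 e2 : R,
        (m1 <> None -> 0 < e1 < eb) -> (m2 <> None -> 0 < e2 < eb) ->
        let f1 := entry_opt m1 e1 d1 in
        let f2 := entry_opt m2 e2 d2 in
        forall bt : strat, focal d1 d2 b f1 f2 bt ->
          ((exists t, m1 = Some t /\
              forall t1, t1 \in dsupp d1 -> fit1 f1 f2 bt t < fit1 f1 f2 bt t1) \/
           (exists t, m2 = Some t /\
              forall t2, t2 \in dsupp d2 -> fit2 f1 f2 bt t < fit2 f1 f2 bt t2))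
          \/ balanced f1 f2 bt.

Definition stable_profile (s : profile) : Prop :=
  exists (d1 d2 : dist) (b : strat),
    valid_dist d1 /\ valid_dist d2 /\ is_equilibrium d1 d2 b /\
    stable d1 d2 b /\
    forall a : A1 * A2, aggregate d1 d2 b a = s.1 a.1 * s.2 a.2.

Definition pareto_dominates (s s' : profile) : Prop :=
  ext pi1 s.1 s.2 >= ext pi1 s'.1 s'.2 /\ ext pi2 s.1 s.2 >= ext pi2 s'.1 s'.2 /\
  (ext pi1 s.1 s.2 > ext pi1 s'.1 s'.2 \/ ext pi2 s.1 s.2 > ext pi2 s'.1 s'.2).

Definition pareto_efficient (s : profile) : Prop :=
  ~ exists s' : profile, is_mixed s'.1 /\ is_mixed s'.2 /\ pareto_dominates s' s.

Definition strict_nash (a : A1 * A2) : Prop :=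
  (forall x1, x1 != a.1 -> pi1 (x1, a.2) < pi1 a) /\
  (forall x2, x2 != a.2 -> pi2 (a.1, x2) < pi2 a).

End Game.

(* The incumbents are the types for which a1, resp. a2, is strictly dominant, so
   they always play (a1, a2).  A mutant meeting an incumbent of the other role
   faces a1 or a2 and, the equilibrium being strict, loses fitness unless it
   behaves like the incumbent.  Two mutants meeting each other play some
   equilibrium of their own; Pareto efficiency of (a1, a2) says that any gain of
   one of them is paid for by a loss of the other that is at least proportional,
   with a constant K valid for all mixed profiles (first for pure profiles, then
   by a cone argument).  When the mutant shares are below 1 / (2 K^2) these gains
   cannot outweigh the losses against the incumbents: either some mutant is
   strictly less fit than its incumbent, or all types are equally fit. *)

From HB Require Import structures.
From mathcomp Require Import all_boot all_order all_algebra.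
From mathcomp Require Import ring lra.
Import Order.TTheory GRing.Theory Num.Theory.
Local Open Scope ring_scope.
Set Implicit Arguments. Unset Strict Implicit. Unset Printing Implicit Defensive.

Section Tradeoff.
Variable R : realFieldType.

Lemma wsum_tradeoff (I : finType) (v1 v2 : I -> R) (w : {ffun I -> R}) (K : R) :
  0 <= K ->
  (forall mu : {ffun I -> R}, (forall i, 0 <= mu i) ->
     0 <= \sum_i mu i * v2 i -> \sum_i mu i * v1 i <= 0) ->
  (forall i, 0 <= v2 i -> K * v1 i + v2 i <= 0) ->
  (forall i, 0 <= w i) -> 0 <= \sum_i w i * v2 i ->
  K * (\sum_i w i * v1 i) + \sum_i w i * v2 i <= 0.
Proof.
move=> K_ge0 cone pointwise w_ge0.
pose P i := 0 < v2 i.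
pose q1 := \sum_(i | P i) w i * v1 i; pose q2 := \sum_(i | P i) w i * v2 i.
pose r1 := \sum_(i | ~~ P i) w i * v1 i; pose r2 := \sum_(i | ~~ P i) w i * v2 i.
have sum_split (v : I -> R) : \sum_i w i * v i =
    \sum_(i | P i) w i * v i + \sum_(i | ~~ P i) w i * v i by rewrite (bigID P).
rewrite !sum_split -/q1 -/q2 -/r1 -/r2 => p2_ge0.
have q_tradeoff : K * q1 + q2 <= 0.
  rewrite mulr_sumr -big_split /=; apply: sumr_le0 => i Pi.
  have -> : K * (w i * v1 i) + w i * v2 i = w i * (K * v1 i + v2 i) by ring.
  by rewrite mulr_ge0_le0 // pointwise // ltW.
have q2_ge0 : 0 <= q2 by apply: sumr_ge0 => i Pi; rewrite mulr_ge0 // ltW.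
have r2_le0 : r2 <= 0 by apply: sumr_le0 => i notPi; rewrite mulr_ge0_le0 // leNgt.
have [q2_0|q2_gt0] := eqVneq q2 0.
  have := cone w w_ge0; rewrite !sum_split -/q1 -/q2 -/r1 -/r2.
  move=> /(_ p2_ge0) p1_le0.
  have : K * (q1 + r1) <= 0 by rewrite mulr_ge0_le0.
  lra.
(* Reweight the two halves so that their v2-masses cancel. *)
pose mu := [ffun i => if P i then - r2 * w i else q2 * w i].
have mu_ge0 i : 0 <= mu i.
  by rewrite /mu ffunE; case: ifP => _;
    rewrite mulr_ge0 // ?oppr_ge0 // ltW // lt_def q2_gt0.
have sum_mu (v : I -> R) : \sum_i mu i * v i =
    - r2 * \sum_(i | P i) w i * v i + q2 * \sum_(i | ~~ P i) w i * v i.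
  rewrite (bigID P) /= !mulr_sumr.
  congr (_ + _); apply: eq_bigr => i Pi.
  - by rewrite /mu ffunE Pi mulrA.
  - by rewrite /mu ffunE (negbTE Pi) mulrA.
have := cone mu mu_ge0; rewrite !sum_mu -/q1 -/q2 -/r1 -/r2.
have -> : - r2 * q2 + q2 * r2 = 0 by ring.
move=> /(_ (lexx 0)) mu_v1_le0.
have : 0 <= (q2 + r2) * - (K * q1 + q2) by rewrite mulr_ge0 // oppr_ge0.
have : K * (- r2 * q1 + q2 * r1) <= 0 by rewrite mulr_ge0_le0.
have : 0 < q2 by rewrite lt_def q2_gt0.
nra.
Qed.

Lemma pointwise_tradeoff (K u v : R) :
  (0 <= u -> 0 <= v -> u = 0 /\ v = 0) -> (u != 0 -> `|v| <= K * `|u|) ->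
  0 <= v -> K * u + v <= 0.
Proof.
move=> no_gain ratio v_ge0; have [u_ge0|u_lt0] := lerP 0 u.
  by have [-> ->] := no_gain u_ge0 v_ge0; rewrite mulr0 addr0.
by move: (ratio (ltr0_neq0 u_lt0)); rewrite ger0_norm // ltr0_norm //; lra.
Qed.

Lemma norm_wsum_le (I : finType) (w u v : I -> R) (K : R) :
  (forall i, 0 <= w i) -> (forall i, `|u i| <= - (K * v i)) ->
  `|\sum_i w i * u i| <= - (K * \sum_i w i * v i).
Proof.
move=> w_ge0 uv; rewrite mulr_sumr -sumrN.
apply: (le_trans (ler_norm_sum _ _ _)); apply: ler_sum => i _.
rewrite normrM ger0_norm // mulrCA -mulrN.
exact: ler_wpM2l.
Qed.

(* A summand with a zero denominator vanishes, since x / 0 = 0. *)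
Definition ratio_bound (X : finType) (u v : X -> R) : R :=
  1 + \sum_x (`|v x| / `|u x| + `|u x| / `|v x|).

Lemma ratio_boundC (X : finType) (u v : X -> R) : ratio_bound u v = ratio_bound v u.
Proof. by rewrite /ratio_bound; under eq_bigr do rewrite addrC. Qed.

Lemma ratio_bound_ge1 (X : finType) (u v : X -> R) : 1 <= ratio_bound u v.
Proof. by rewrite lerDl sumr_ge0 // => x _; rewrite addr_ge0 ?divr_ge0. Qed.

Lemma ler_ratio_bound (X : finType) (u v : X -> R) x :
  u x != 0 -> `|v x| <= ratio_bound u v * `|u x|.
Proof.
move=> ux_neq0; rewrite -ler_pdivrMr ?normr_gt0 //.
rewrite /ratio_bound (bigD1 x) //= addrA -addrA addrCA -!addrA lerDl.
by rewrite !addr_ge0 ?divr_ge0 ?sumr_ge0 // => y _; rewrite addr_ge0 ?divr_ge0.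
Qed.

End Tradeoff.

Lemma nonneg_comb_eq0 (R : realFieldType) (c1 c2 x y : R) :
  0 < c1 -> 0 < c2 -> 0 <= x -> 0 <= y -> c1 * x + c2 * y <= 0 -> x = 0 /\ y = 0.
Proof.
move=> c1_gt0 c2_gt0 x_ge0 y_ge0 comb_le0.
have c1x_ge0 : 0 <= c1 * x by rewrite mulr_ge0 // ltW.
have c2y_ge0 : 0 <= c2 * y by rewrite mulr_ge0 // ltW.
have /eqP : c1 * x = 0 by lra.
have /eqP : c2 * y = 0 by lra.
by rewrite !mulf_eq0 (gt_eqF c1_gt0) (gt_eqF c2_gt0) => /eqP -> /eqP ->.
Qed.

(* Mutant i has share e_i; g_i is its gain when meeting the other mutant, d_i its
   loss when meeting the incumbent of the other role, and z_i the gain of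
   incumbent i when meeting the other mutant.  fit_i_ge says that mutant i is at
   least as fit as incumbent i. *)
Section SmallEntry.
Variables (R : realFieldType) (K e1 e2 g1 g2 z1 z2 d1 d2 : R).
Hypotheses (K_ge1 : 1 <= K) (e1_gt0 : 0 < e1) (e2_gt0 : 0 < e2).
Hypotheses (e1_small : e1 * (2 * (K * K)) < 1) (e2_small : e2 * (2 * (K * K)) < 1).
Hypotheses (z1_le : `|z1| <= K * d2) (z2_le : `|z2| <= K * d1).
Hypotheses (fit1_ge : 0 <= e2 * (g1 - z1) - (1 - e2) * d1).
Hypotheses (fit2_ge : 0 <= e1 * (g2 - z2) - (1 - e1) * d2).

Let d1_ge0 : 0 <= d1.
Proof. by have := normr_ge0 z2; have := z2_le; have := K_ge1; nra. Qed.
Let d2_ge0 : 0 <= d2.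
Proof. by have := normr_ge0 z1; have := z1_le; have := K_ge1; nra. Qed.
Let e1_bounds : e1 + K * K * e1 < 1 /\ 2 * e1 < 1.
Proof.
have KK_ge1 : 1 <= K * K by rewrite -[1]mulr1 ler_pM.
by have := ler_wpM2l (ltW e1_gt0) KK_ge1; have := e1_small; lra.
Qed.
Let e2_bounds : e2 + K * K * e2 < 1 /\ 2 * e2 < 1.
Proof.
have KK_ge1 : 1 <= K * K by rewrite -[1]mulr1 ler_pM.
by have := ler_wpM2l (ltW e2_gt0) KK_ge1; have := e2_small; lra.
Qed.
Let loss1 : (1 - e2) * d1 <= e2 * g1 + e2 * K * d2.
Proof.
move: z1_le; rewrite ler_norml => /andP[z1_ge _].
by have := ler_wpM2l (ltW e2_gt0) z1_ge; have := fit1_ge; lra.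
Qed.
Let loss2 : (1 - e1) * d2 <= e1 * g2 + e1 * K * d1.
Proof.
move: z2_le; rewrite ler_norml => /andP[z2_ge _].
by have := ler_wpM2l (ltW e1_gt0) z2_ge; have := fit2_ge; lra.
Qed.

Lemma small_entry_losses_eq0 : (0 <= g2 -> K * g1 + g2 <= 0) ->
  (0 <= g1 -> K * g2 + g1 <= 0) -> d1 = 0 /\ d2 = 0.
Proof.
move=> tradeoff1 tradeoff2.
have K_gt0 : 0 < K by apply: lt_le_trans K_ge1.
have e12_ge0 : 0 <= e1 * e2 by rewrite mulr_ge0 // ltW.
have [e1_sum e1_half] := e1_bounds; have [e2_sum e2_half] := e2_bounds.
have [g2_ge0|g2_lt0] := lerP 0 g2.
  have l1 := ler_wpM2l (ltW (mulr_gt0 K_gt0 e1_gt0)) loss1.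
  have l2 := ler_wpM2l (ltW e2_gt0) loss2.
  have tr := ler_wpM2l e12_ge0 (tradeoff1 g2_ge0).
  apply: (@nonneg_comb_eq0 _ (K * e1 * (1 - 2 * e2)) (e2 * (1 - e1 - K * K * e1))).
  - by rewrite !mulr_gt0 // subr_gt0.
  - by rewrite mulr_gt0 //; lra.
  - exact: d1_ge0.
  - exact: d2_ge0.
  - by move: l1 l2 tr; lra.
have [g1_ge0|g1_lt0] := lerP 0 g1.
  have l1 := ler_wpM2l (ltW e1_gt0) loss1.
  have l2 := ler_wpM2l (ltW (mulr_gt0 K_gt0 e2_gt0)) loss2.
  have tr := ler_wpM2l e12_ge0 (tradeoff2 g1_ge0).
  apply: (@nonneg_comb_eq0 _ (e1 * (1 - e2 - K * K * e2)) (K * e2 * (1 - 2 * e1))).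
  - by rewrite mulr_gt0 //; lra.
  - by rewrite !mulr_gt0 // subr_gt0.
  - exact: d1_ge0.
  - exact: d2_ge0.
  - by move: l1 l2 tr; lra.
have loss1_lt : (1 - e2) * d1 < e2 * K * d2.
  have : e2 * g1 < 0 by rewrite pmulr_rlt0.
  by have := loss1; lra.
have loss2_lt : (1 - e1) * d2 < e1 * K * d1.
  have : e1 * g2 < 0 by rewrite pmulr_rlt0.
  by have := loss2; lra.
(* Otherwise both mutants lose against each other, and chaining loss1_lt with
   loss2_lt gives (1 - e1) (1 - e2) d1 < K^2 e1 e2 d1, impossible for small e1, e2. *)
have e1_lt1 : 0 < 1 - e1 by lra.
have e2_lt1 : 0 < 1 - e2 by lra.
have e1_half_gt0 : 0 < 1 - 2 * e1 by lra.
have := loss1_lt; rewrite -(ltr_pM2l e1_lt1).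
have := ler_wpM2l (mulr_ge0 (ltW e2_gt0) (ltW K_gt0)) (ltW loss2_lt).
have := ler_wpM2l (mulr_ge0 (ltW e1_gt0) d1_ge0) (ltW e2_sum).
have := mulr_ge0 (ltW (mulr_gt0 e1_half_gt0 e2_lt1)) d1_ge0.
lra.
Qed.

Lemma small_entry_fitness_eq : (0 <= g2 -> K * g1 + g2 <= 0) ->
  (0 <= g1 -> K * g2 + g1 <= 0) ->
  e2 * (g1 - z1) - (1 - e2) * d1 = 0 /\ e1 * (g2 - z2) - (1 - e1) * d2 = 0.
Proof.
move=> tradeoff1 tradeoff2.
have [d1_0 d2_0] := small_entry_losses_eq0 tradeoff1 tradeoff2.
have /eqP z1_0 : z1 == 0 by rewrite -normr_le0 -(mulr0 K) -d2_0.
have /eqP z2_0 : z2 == 0 by rewrite -normr_le0 -(mulr0 K) -d1_0.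
move: fit1_ge fit2_ge; rewrite d1_0 d2_0 z1_0 z2_0 !subr0 !mulr0 !subr0.
rewrite !pmulr_rge0 // => g1_ge0 g2_ge0.
have K_ge0 : 0 <= K by apply: le_trans K_ge1.
have tr1 := tradeoff1 g2_ge0; have tr2 := tradeoff2 g1_ge0.
have Kg1_ge0 := mulr_ge0 K_ge0 g1_ge0; have Kg2_ge0 := mulr_ge0 K_ge0 g2_ge0.
have -> : g1 = 0 by lra.
have -> : g2 = 0 by lra.
by rewrite !mulr0.
Qed.

End SmallEntry.

Section MixedExtension.
Variables (R : realFieldType) (A1 A2 : finType).

Lemma sum_diracM (A : finType) (a : A) (f : A -> R) :
  \sum_x dirac R a x * f x = f a.
Proof.
rewrite (bigD1 a) //= ffunE eqxx mul1r big1 ?addr0 // => x /negbTE xa.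
by rewrite ffunE xa mul0r.
Qed.

Lemma dirac_ge0 (A : finType) (a x : A) : 0 <= dirac R a x.
Proof. by rewrite ffunE; case: ifP. Qed.

Lemma dirac_mixed (A : finType) (a : A) : is_mixed (dirac R a).
Proof.
split; first exact: dirac_ge0.
by have := sum_diracM a (fun _ => 1); under eq_bigr do rewrite mulr1.
Qed.

Lemma mixed_le1 (A : finType) (s : {ffun A -> R}) a : is_mixed s -> s a <= 1.
Proof. by move=> [s_ge0 <-]; rewrite (bigD1 a) //= lerDl sumr_ge0. Qed.

Lemma mixed_eq_dirac (A : finType) (s : {ffun A -> R}) a :
  is_mixed s -> 1 <= s a -> s = dirac R a.
Proof.
move=> [s_ge0 sum_s] sa1; apply/ffunP => x; rewrite ffunE.
have sa_le1 := mixed_le1 a (conj s_ge0 sum_s).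
have [->|xa] := eqVneq x a; first by apply/eqP; rewrite eq_le sa_le1 sa1.
have : s a + \sum_(y | y != a) s y = 1 by rewrite -sum_s [in RHS](bigD1 a).
have : s x <= \sum_(y | y != a) s y by rewrite (bigD1 x xa) /= lerDl sumr_ge0.
by have := s_ge0 x; lra.
Qed.

Lemma mixed_normalize (A : finType) (s : {ffun A -> R}) :
  (forall x, 0 <= s x) -> \sum_x s x != 0 ->
  is_mixed [ffun x => (\sum_y s y)^-1 * s x].
Proof.
move=> s_ge0 s_neq0; split=> [x|].
  by rewrite ffunE mulr_ge0 // invr_ge0 sumr_ge0.
by under eq_bigr do rewrite ffunE; rewrite -mulr_sumr mulVf.
Qed.

Lemma ext_diracl (u : A1 * A2 -> R) a1 (s2 : {ffun A2 -> R}) :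
  ext u (dirac R a1) s2 = \sum_x2 s2 x2 * u (a1, x2).
Proof.
rewrite /ext (bigD1 a1) //= [X in _ + X]big1 ?addr0.
  by apply: eq_bigr => x2 _; rewrite ffunE eqxx mul1r.
by move=> x1 /negbTE x1a; apply: big1 => x2 _; rewrite ffunE x1a !mul0r.
Qed.

Lemma ext_diracr (u : A1 * A2 -> R) (s1 : {ffun A1 -> R}) a2 :
  ext u s1 (dirac R a2) = \sum_x1 s1 x1 * u (x1, a2).
Proof.
apply: eq_bigr => x1 _; rewrite (bigD1 a2) //= big1 ?addr0.
  by rewrite ffunE eqxx mulr1.
by move=> x2 /negbTE x2a; rewrite ffunE x2a mulr0 mul0r.
Qed.

Lemma ext_dirac (u : A1 * A2 -> R) x1 x2 : ext u (dirac R x1) (dirac R x2) = u (x1, x2).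
Proof. by rewrite ext_diracl (sum_diracM x2 (fun y => u (x1, y))). Qed.

Lemma ext_sum_diracl (u : A1 * A2 -> R) (s1 : {ffun A1 -> R}) (s2 : {ffun A2 -> R}) :
  ext u s1 s2 = \sum_x1 s1 x1 * ext u (dirac R x1) s2.
Proof.
apply: eq_bigr => x1 _; rewrite ext_diracl mulr_sumr.
by apply: eq_bigr => x2 _; ring.
Qed.

Lemma ext_scale (u : A1 * A2 -> R) c1 c2 (s1 : {ffun A1 -> R}) (s2 : {ffun A2 -> R}) :
  ext u [ffun x => c1 * s1 x] [ffun x => c2 * s2 x] = c1 * c2 * ext u s1 s2.
Proof.
rewrite /ext mulr_sumr; apply: eq_bigr => x1 _; rewrite mulr_sumr.
by apply: eq_bigr => x2 _; rewrite !ffunE; ring.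
Qed.

Lemma ext_shift (u : A1 * A2 -> R) c (s1 : {ffun A1 -> R}) (s2 : {ffun A2 -> R}) :
  is_mixed s1 -> is_mixed s2 ->
  ext u s1 s2 = ext (fun x => u x - c) s1 s2 + c.
Proof.
move=> [_ sum_s1] [_ sum_s2].
have -> : ext (fun x => u x - c) s1 s2 = ext u s1 s2 - c * \sum_x1 \sum_x2 s1 x1 * s2 x2.
  rewrite /ext mulr_sumr -sumrB; apply: eq_bigr => x1 _.
  by rewrite mulr_sumr -sumrB; apply: eq_bigr => x2 _; ring.
under eq_bigr do rewrite -mulr_sumr.
by rewrite -mulr_suml sum_s1 sum_s2 mulr1 mulr1 subrK.
Qed.

Lemma ext_eq0l (u : A1 * A2 -> R) (s1 : {ffun A1 -> R}) (s2 : {ffun A2 -> R}) :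
  (forall x, s1 x = 0) -> ext u s1 s2 = 0.
Proof.
by move=> s1_0; apply: big1 => x1 _; apply: big1 => x2 _; rewrite s1_0 !mul0r.
Qed.

Lemma ext_eq0r (u : A1 * A2 -> R) (s1 : {ffun A1 -> R}) (s2 : {ffun A2 -> R}) :
  (forall x, s2 x = 0) -> ext u s1 s2 = 0.
Proof.
by move=> s2_0; apply: big1 => x1 _; apply: big1 => x2 _; rewrite s2_0 mulr0 mul0r.
Qed.

Lemma ext_tradeoff (u1 u2 : A1 * A2 -> R) (K : R)
    (s1 : {ffun A1 -> R}) (s2 : {ffun A2 -> R}) : 0 <= K ->
  (forall (t1 : {ffun A1 -> R}) (t2 : {ffun A2 -> R}),
     (forall x, 0 <= t1 x) -> (forall x, 0 <= t2 x) ->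
     0 <= ext u2 t1 t2 -> ext u1 t1 t2 <= 0) ->
  (forall x, 0 <= u2 x -> K * u1 x + u2 x <= 0) ->
  (forall x, 0 <= s1 x) -> (forall x, 0 <= s2 x) ->
  0 <= ext u2 s1 s2 -> K * ext u1 s1 s2 + ext u2 s1 s2 <= 0.
Proof.
move=> K_ge0 cone pointwise.
have pure_row x1 (t2 : {ffun A2 -> R}) : (forall x, 0 <= t2 x) ->
    0 <= ext u2 (dirac R x1) t2 ->
    K * ext u1 (dirac R x1) t2 + ext u2 (dirac R x1) t2 <= 0.
  move=> t2_ge0; rewrite !ext_diracl.
  apply: wsum_tradeoff => // [mu mu_ge0|x2 /pointwise //].
  by have := cone _ mu (dirac_ge0 x1) mu_ge0; rewrite !ext_diracl.
move=> s1_ge0 s2_ge0; rewrite (ext_sum_diracl u1) (ext_sum_diracl u2).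
apply: wsum_tradeoff => // [mu mu_ge0|x1]; last exact: pure_row.
by have := cone mu s2 mu_ge0 s2_ge0; rewrite (ext_sum_diracl u1) (ext_sum_diracl u2).
Qed.

End MixedExtension.

Lemma eq_on_seq1 (T : eqType) (U : Type) (f : T -> U) x t t' :
  t \in [:: x] -> t' \in [:: x] -> f t = f t'.
Proof. by rewrite !mem_seq1 => /eqP -> /eqP ->. Qed.

Lemma eq_on_seq2 (T : eqType) (U : Type) (f : T -> U) x y : f x = f y ->
  forall t t', t \in [:: x; y] -> t' \in [:: x; y] -> f t = f t'.
Proof.
by move=> fxy t t'; rewrite !inE => /orP[]/eqP-> /orP[]/eqP->.
Qed.

Section Stability.
Variables (R : realFieldType) (A1 A2 : finType) (pi1 pi2 : A1 * A2 -> R).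
Variables (a1 : A1) (a2 : A2).
Hypothesis efficient : pareto_efficient pi1 pi2 (dirac R a1, dirac R a2).
Hypothesis strict : strict_nash pi1 pi2 (a1, a2).

Definition gain (u : A1 * A2 -> R) (x : A1 * A2) : R := u x - u (a1, a2).

Lemma ext_gain (u : A1 * A2 -> R) (s1 : {ffun A1 -> R}) (s2 : {ffun A2 -> R}) :
  is_mixed s1 -> is_mixed s2 -> ext u s1 s2 = ext (gain u) s1 s2 + u (a1, a2).
Proof. exact: ext_shift. Qed.

Lemma mixed_gains_eq0 (s1 : {ffun A1 -> R}) (s2 : {ffun A2 -> R}) :
  is_mixed s1 -> is_mixed s2 ->
  0 <= ext (gain pi1) s1 s2 -> 0 <= ext (gain pi2) s1 s2 ->
  ext (gain pi1) s1 s2 = 0 /\ ext (gain pi2) s1 s2 = 0.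
Proof.
move=> s1_mixed s2_mixed gain1_ge0 gain2_ge0.
have not_pos : ~ (0 < ext (gain pi1) s1 s2 \/ 0 < ext (gain pi2) s1 s2).
  move=> pos; apply: efficient; exists (s1, s2).
  split; first exact: s1_mixed.
  split; first exact: s2_mixed.
  rewrite /pareto_dominates /= !ext_dirac.
  rewrite (ext_gain pi1 s1_mixed s2_mixed) (ext_gain pi2 s1_mixed s2_mixed).
  by do 2?split; [lra | lra | case: pos => ?; [left | right]; lra].
have [gain1_gt0|gain1_le0] := ltP 0 (ext (gain pi1) s1 s2).
  by exfalso; apply: not_pos; left.
have [gain2_gt0|gain2_le0] := ltP 0 (ext (gain pi2) s1 s2).
  by exfalso; apply: not_pos; right.
by split; lra.
Qed.

Lemma nonneg_gains_eq0 (s1 : {ffun A1 -> R}) (s2 : {ffun A2 -> R}) :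
  (forall x, 0 <= s1 x) -> (forall x, 0 <= s2 x) ->
  0 <= ext (gain pi1) s1 s2 -> 0 <= ext (gain pi2) s1 s2 ->
  ext (gain pi1) s1 s2 = 0 /\ ext (gain pi2) s1 s2 = 0.
Proof.
move=> s1_ge0 s2_ge0 gain1_ge0 gain2_ge0.
have [sum1_0|sum1_neq0] := eqVneq (\sum_x s1 x) 0.
  by rewrite !ext_eq0l // => x; apply: (psumr_eq0P (fun i _ => s1_ge0 i) sum1_0).
have [sum2_0|sum2_neq0] := eqVneq (\sum_x s2 x) 0.
  by rewrite !ext_eq0r // => x; apply: (psumr_eq0P (fun i _ => s2_ge0 i) sum2_0).
have c_gt0 : 0 < (\sum_x s1 x)^-1 * (\sum_x s2 x)^-1.
  by rewrite mulr_gt0 // invr_gt0 lt_def ?sum1_neq0 ?sum2_neq0 sumr_ge0.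
have := mixed_gains_eq0 (mixed_normalize s1_ge0 sum1_neq0)
  (mixed_normalize s2_ge0 sum2_neq0).
rewrite !ext_scale !pmulr_rge0 // => /(_ gain1_ge0 gain2_ge0) [/eqP + /eqP].
rewrite !mulf_eq0 !invr_eq0 (negbTE sum1_neq0) (negbTE sum2_neq0).
by move=> /eqP -> /eqP ->.
Qed.

Lemma pure_gains_eq0 x : 0 <= gain pi1 x -> 0 <= gain pi2 x ->
  gain pi1 x = 0 /\ gain pi2 x = 0.
Proof.
case: x => x1 x2; have := @nonneg_gains_eq0 (dirac R x1) (dirac R x2).
by rewrite !ext_dirac; apply; apply: dirac_ge0.
Qed.

Definition gain_bound : R := ratio_bound (gain pi1) (gain pi2).

Lemma gain_bound_ge1 : 1 <= gain_bound.
Proof. exact: ratio_bound_ge1. Qed.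

Lemma gain_bound_ge0 : 0 <= gain_bound.
Proof. exact: le_trans gain_bound_ge1. Qed.

Lemma gain_tradeoff12 (s1 : {ffun A1 -> R}) (s2 : {ffun A2 -> R}) :
  (forall x, 0 <= s1 x) -> (forall x, 0 <= s2 x) -> 0 <= ext (gain pi2) s1 s2 ->
  gain_bound * ext (gain pi1) s1 s2 + ext (gain pi2) s1 s2 <= 0.
Proof.
apply: ext_tradeoff gain_bound_ge0 _ _ => [t1 t2 t1_ge0 t2_ge0 gain2_ge0|x].
  rewrite leNgt; apply/negP => gain1_gt0.
  have [gain1_eq0 _] := nonneg_gains_eq0 t1_ge0 t2_ge0 (ltW gain1_gt0) gain2_ge0.
  by rewrite gain1_eq0 ltxx in gain1_gt0.
by apply: pointwise_tradeoff => [|/ler_ratio_bound //]; apply: pure_gains_eq0.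
Qed.

Lemma gain_tradeoff21 (s1 : {ffun A1 -> R}) (s2 : {ffun A2 -> R}) :
  (forall x, 0 <= s1 x) -> (forall x, 0 <= s2 x) -> 0 <= ext (gain pi1) s1 s2 ->
  gain_bound * ext (gain pi2) s1 s2 + ext (gain pi1) s1 s2 <= 0.
Proof.
rewrite /gain_bound ratio_boundC.
apply: ext_tradeoff (le_trans ler01 (ratio_bound_ge1 _ _)) _ _
  => [t1 t2 t1_ge0 t2_ge0 gain1_ge0|x].
  rewrite leNgt; apply/negP => gain2_gt0.
  have [_ gain2_eq0] := nonneg_gains_eq0 t1_ge0 t2_ge0 gain1_ge0 (ltW gain2_gt0).
  by rewrite gain2_eq0 ltxx in gain2_gt0.
apply: pointwise_tradeoff => [gain2_ge0 gain1_ge0|/ler_ratio_bound //].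
by have [-> ->] := pure_gains_eq0 gain1_ge0 gain2_ge0.
Qed.

Lemma deviation1_gains (t : {ffun A1 -> R}) : (forall x, 0 <= t x) ->
  `|ext (gain pi2) t (dirac R a2)| <= - (gain_bound * ext (gain pi1) t (dirac R a2)).
Proof.
move=> t_ge0; rewrite !ext_diracr; apply: norm_wsum_le => // x1.
have [->|x1_neq] := eqVneq x1 a1; first by rewrite /gain !subrr normr0 mulr0 oppr0.
have gain1_lt0 : gain pi1 (x1, a2) < 0 by rewrite subr_lt0; apply: strict.1.
have := ler_ratio_bound (gain pi2) (ltr0_neq0 gain1_lt0).
by rewrite (ltr0_norm gain1_lt0) mulrN.
Qed.

Lemma deviation2_gains (t : {ffun A2 -> R}) : (forall x, 0 <= t x) ->
  `|ext (gain pi1) (dirac R a1) t| <= - (gain_bound * ext (gain pi2) (dirac R a1) t).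
Proof.
move=> t_ge0; rewrite !ext_diracl; apply: norm_wsum_le => // x2.
have [->|x2_neq] := eqVneq x2 a2; first by rewrite /gain !subrr normr0 mulr0 oppr0.
have gain2_lt0 : gain pi2 (a1, x2) < 0 by rewrite subr_lt0; apply: strict.2.
have := ler_ratio_bound (gain pi1) (ltr0_neq0 gain2_lt0).
by rewrite -ratio_boundC (ltr0_norm gain2_lt0) mulrN.
Qed.

Lemma deviation1_gain_le0 (t : {ffun A1 -> R}) : (forall x, 0 <= t x) ->
  ext (gain pi1) t (dirac R a2) <= 0.
Proof.
move=> t_ge0; have := le_trans (normr_ge0 _) (deviation1_gains t_ge0).
by rewrite oppr_ge0 pmulr_rle0 // (lt_le_trans ltr01 gain_bound_ge1).
Qed.

Lemma deviation2_gain_le0 (t : {ffun A2 -> R}) : (forall x, 0 <= t x) ->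
  ext (gain pi2) (dirac R a1) t <= 0.
Proof.
move=> t_ge0; have := le_trans (normr_ge0 _) (deviation2_gains t_ge0).
by rewrite oppr_ge0 pmulr_rle0 // (lt_le_trans ltr01 gain_bound_ge1).
Qed.

Definition dominant_a1 : Theta R A1 A2 := [ffun x => if x.1 == a1 then 1 else 0].
Definition dominant_a2 : Theta R A1 A2 := [ffun x => if x.2 == a2 then 1 else 0].

Lemma ext_dominant_a1 (s1 : {ffun A1 -> R}) (s2 : {ffun A2 -> R}) :
  ext dominant_a1 s1 s2 = s1 a1 * \sum_x s2 x.
Proof.
rewrite ext_sum_diracl -(sum_diracM a1 s1) mulr_suml; apply: eq_bigr => x1 _.
rewrite ext_diracl !mulr_sumr; apply: eq_bigr => x2 _.
by rewrite !ffunE /=; case: (_ == _); ring.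
Qed.

Lemma ext_dominant_a2 (s1 : {ffun A1 -> R}) (s2 : {ffun A2 -> R}) :
  ext dominant_a2 s1 s2 = (\sum_x s1 x) * s2 a2.
Proof.
rewrite ext_sum_diracl mulr_suml; apply: eq_bigr => x1 _.
rewrite ext_diracl -(sum_diracM a2 s2) !mulr_sumr; apply: eq_bigr => x2 _.
by rewrite !ffunE /=; case: (_ == _); ring.
Qed.

Lemma nash_dominant_a1 (u : A1 * A2 -> R) (s : profile R A1 A2) :
  nash dominant_a1 u s -> s.1 = dirac R a1.
Proof.
move=> [s1_mixed [[_ sum_s2] [best1 _]]]; apply: mixed_eq_dirac s1_mixed _.
by have := best1 _ (dirac_mixed R a1); rewrite !ext_dominant_a1 sum_s2 !mulr1 ffunE eqxx.
Qed.

Lemma nash_dominant_a2 (u : A1 * A2 -> R) (s : profile R A1 A2) :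
  nash u dominant_a2 s -> s.2 = dirac R a2.
Proof.
move=> [[_ sum_s1] [s2_mixed [_ best2]]]; apply: mixed_eq_dirac s2_mixed _.
by have := best2 _ (dirac_mixed R a2); rewrite !ext_dominant_a2 sum_s1 !mul1r ffunE eqxx.
Qed.

Lemma nash_dominant : nash dominant_a1 dominant_a2 (dirac R a1, dirac R a2).
Proof.
have [_ sum1] := dirac_mixed R a1; have [_ sum2] := dirac_mixed R a2.
do 2 (split; first exact: dirac_mixed); split=> /= t t_mixed.
  by rewrite !ext_dominant_a1 sum2 !mulr1 ffunE eqxx mixed_le1.
by rewrite !ext_dominant_a2 sum1 !mul1r ffunE eqxx mixed_le1.
Qed.

Definition incumbents1 : dist R A1 A2 := Dist [:: dominant_a1] (fun _ => 1).
Definition incumbents2 : dist R A1 A2 := Dist [:: dominant_a2] (fun _ => 1).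
Definition play_star : strat R A1 A2 := fun _ _ => (dirac R a1, dirac R a2).

Lemma fit1_incumbents (f1 : dist R A1 A2) (bt : strat R A1 A2) t :
  fit1 pi1 f1 incumbents2 bt t = ext pi1 (bt t dominant_a2).1 (bt t dominant_a2).2.
Proof. by rewrite /fit1 /= big_seq1 mul1r. Qed.

Lemma fit2_incumbents (f2 : dist R A1 A2) (bt : strat R A1 A2) t :
  fit2 pi2 incumbents1 f2 bt t = ext pi2 (bt dominant_a1 t).1 (bt dominant_a1 t).2.
Proof. by rewrite /fit2 /= big_seq1 mul1r. Qed.

Lemma fit1_entry (f1 : dist R A1 A2) (bt : strat R A1 A2) t m e :
  m != dominant_a2 -> fit1 pi1 f1 (entry m e incumbents2) bt t =
  e * ext pi1 (bt t m).1 (bt t m).2 +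
  (1 - e) * ext pi1 (bt t dominant_a2).1 (bt t dominant_a2).2.
Proof.
by move=> m_new; rewrite /fit1 /= big_cons big_seq1 eqxx eq_sym (negbTE m_new) mulr1.
Qed.

Lemma fit2_entry (f2 : dist R A1 A2) (bt : strat R A1 A2) t m e :
  m != dominant_a1 -> fit2 pi2 (entry m e incumbents1) f2 bt t =
  e * ext pi2 (bt m t).1 (bt m t).2 +
  (1 - e) * ext pi2 (bt dominant_a1 t).1 (bt dominant_a1 t).2.
Proof.
by move=> m_new; rewrite /fit2 /= big_cons big_seq1 eqxx eq_sym (negbTE m_new) mulr1.
Qed.

Lemma mutant1_outcome m e (bt : strat R A1 A2) : m != dominant_a1 ->
  focal incumbents1 incumbents2 play_star (entry m e incumbents1) incumbents2 bt ->
  let f1 := entry m e incumbents1 in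
  (forall t, t \in dsupp incumbents1 ->
     fit1 pi1 f1 incumbents2 bt m < fit1 pi1 f1 incumbents2 bt t) \/
  balanced pi1 pi2 f1 incumbents2 bt.
Proof.
move=> m_new [bt_nash incumbent_bt] f1.
have m_nash : nash m dominant_a2 (bt m dominant_a2) by apply: bt_nash; rewrite ?inE eqxx.
have [m_mixed _] := m_nash.
set X1 := ext (gain pi1) (bt m dominant_a2).1 (dirac R a2).
have fit_m : fit1 pi1 f1 incumbents2 bt m = X1 + pi1 (a1, a2).
  rewrite fit1_incumbents (nash_dominant_a2 m_nash).
  by rewrite (ext_gain pi1 m_mixed (dirac_mixed R a2)).
have fit_inc : fit1 pi1 f1 incumbents2 bt dominant_a1 = pi1 (a1, a2).
  by rewrite fit1_incumbents incumbent_bt ?mem_seq1 // ext_dirac.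
have : X1 < 0 \/ X1 = 0.
  by have := deviation1_gain_le0 m_mixed.1; rewrite le_eqVlt => /orP[/eqP|]; [right|left].
case=> [X1_lt0|X1_eq0].
  by left=> t; rewrite mem_seq1 => /eqP ->; rewrite fit_m fit_inc; lra.
right; split; last exact: eq_on_seq1.
by apply: eq_on_seq2; rewrite fit_m fit_inc X1_eq0 add0r.
Qed.

Lemma mutant2_outcome m e (bt : strat R A1 A2) : m != dominant_a2 ->
  focal incumbents1 incumbents2 play_star incumbents1 (entry m e incumbents2) bt ->
  let f2 := entry m e incumbents2 in
  (forall t, t \in dsupp incumbents2 ->
     fit2 pi2 incumbents1 f2 bt m < fit2 pi2 incumbents1 f2 bt t) \/
  balanced pi1 pi2 incumbents1 f2 bt.
Proof.
move=> m_new [bt_nash incumbent_bt] f2.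
have m_nash : nash dominant_a1 m (bt dominant_a1 m) by apply: bt_nash; rewrite ?inE eqxx.
have [_ [m_mixed _]] := m_nash.
set Z2 := ext (gain pi2) (dirac R a1) (bt dominant_a1 m).2.
have fit_m : fit2 pi2 incumbents1 f2 bt m = Z2 + pi2 (a1, a2).
  rewrite fit2_incumbents (nash_dominant_a1 m_nash).
  by rewrite (ext_gain pi2 (dirac_mixed R a1) m_mixed).
have fit_inc : fit2 pi2 incumbents1 f2 bt dominant_a2 = pi2 (a1, a2).
  by rewrite fit2_incumbents incumbent_bt ?mem_seq1 // ext_dirac.
have : Z2 < 0 \/ Z2 = 0.
  by have := deviation2_gain_le0 m_mixed.1; rewrite le_eqVlt => /orP[/eqP|]; [right|left].
case=> [Z2_lt0|Z2_eq0].
  by left=> t; rewrite mem_seq1 => /eqP ->; rewrite fit_m fit_inc; lra.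
right; split; first exact: eq_on_seq1.
by apply: eq_on_seq2; rewrite fit_m fit_inc Z2_eq0 add0r.
Qed.

Lemma mutants_outcome m1 m2 e1 e2 (bt : strat R A1 A2) :
  m1 != dominant_a1 -> m2 != dominant_a2 -> 0 < e1 -> 0 < e2 ->
  e1 * (2 * (gain_bound * gain_bound)) < 1 -> e2 * (2 * (gain_bound * gain_bound)) < 1 ->
  let f1 := entry m1 e1 incumbents1 in let f2 := entry m2 e2 incumbents2 in
  focal incumbents1 incumbents2 play_star f1 f2 bt ->
  (forall t, t \in dsupp incumbents1 -> fit1 pi1 f1 f2 bt m1 < fit1 pi1 f1 f2 bt t) \/
  (forall t, t \in dsupp incumbents2 -> fit2 pi2 f1 f2 bt m2 < fit2 pi2 f1 f2 bt t) \/
  balanced pi1 pi2 f1 f2 bt.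
Proof.
move=> m1_new m2_new e1_gt0 e2_gt0 e1_small e2_small f1 f2 [bt_nash incumbent_bt].
have s_nash : nash m1 dominant_a2 (bt m1 dominant_a2).
  by apply: bt_nash; rewrite !inE eqxx ?orbT.
have r_nash : nash dominant_a1 m2 (bt dominant_a1 m2).
  by apply: bt_nash; rewrite !inE eqxx ?orbT.
have [p1_mixed [p2_mixed _]] : nash m1 m2 (bt m1 m2) by apply: bt_nash; rewrite !inE eqxx.
have [s1_mixed _] := s_nash; have [_ [r2_mixed _]] := r_nash.
set X1 := ext (gain pi1) (bt m1 dominant_a2).1 (dirac R a2).
set X2 := ext (gain pi2) (bt m1 dominant_a2).1 (dirac R a2).
set Z1 := ext (gain pi1) (dirac R a1) (bt dominant_a1 m2).2.
set Z2 := ext (gain pi2) (dirac R a1) (bt dominant_a1 m2).2.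
set g1 := ext (gain pi1) (bt m1 m2).1 (bt m1 m2).2.
set g2 := ext (gain pi2) (bt m1 m2).1 (bt m1 m2).2.
have play_star_gain (u : A1 * A2 -> R) :
    ext u (bt dominant_a1 dominant_a2).1 (bt dominant_a1 dominant_a2).2 = u (a1, a2).
  by rewrite incumbent_bt ?mem_seq1 // ext_dirac.
have s2E := nash_dominant_a2 s_nash; have r1E := nash_dominant_a1 r_nash.
have dirac1_mixed := dirac_mixed R a1; have dirac2_mixed := dirac_mixed R a2.
set P1 := pi1 (a1, a2); set P2 := pi2 (a1, a2).
have fit1_m : fit1 pi1 f1 f2 bt m1 = e2 * (g1 + P1) + (1 - e2) * (X1 + P1).
  by rewrite fit1_entry // s2E !(ext_gain pi1).
have fit1_inc : fit1 pi1 f1 f2 bt dominant_a1 = e2 * (Z1 + P1) + (1 - e2) * P1.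
  by rewrite fit1_entry // play_star_gain r1E (ext_gain pi1).
have fit2_m : fit2 pi2 f1 f2 bt m2 = e1 * (g2 + P2) + (1 - e1) * (Z2 + P2).
  by rewrite fit2_entry // r1E !(ext_gain pi2).
have fit2_inc : fit2 pi2 f1 f2 bt dominant_a2 = e1 * (X2 + P2) + (1 - e1) * P2.
  by rewrite fit2_entry // play_star_gain s2E (ext_gain pi2).
have [fit1_lt|fit1_ge] := ltP (e2 * (g1 - Z1) - (1 - e2) * - X1) 0.
  by left=> t; rewrite mem_seq1 => /eqP ->; rewrite fit1_m fit1_inc; lra.
have [fit2_lt|fit2_ge] := ltP (e1 * (g2 - X2) - (1 - e1) * - Z2) 0.
  by right; left=> t; rewrite mem_seq1 => /eqP ->; rewrite fit2_m fit2_inc; lra.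
have Z1_le : `|Z1| <= gain_bound * - Z2.
  by rewrite mulrN; apply: deviation2_gains r2_mixed.1.
have X2_le : `|X2| <= gain_bound * - X1.
  by rewrite mulrN; apply: deviation1_gains s1_mixed.1.
have [balance1 balance2] :=
  small_entry_fitness_eq gain_bound_ge1 e1_gt0 e2_gt0 e1_small e2_small
  Z1_le X2_le fit1_ge fit2_ge (gain_tradeoff12 p1_mixed.1 p2_mixed.1)
  (gain_tradeoff21 p1_mixed.1 p2_mixed.1).
by right; right; split; apply: eq_on_seq2;
  rewrite ?fit1_m ?fit1_inc ?fit2_m ?fit2_inc; lra.
Qed.

Definition entry_bound : R := (2 * (gain_bound * gain_bound))^-1.

Lemma entry_bound_gt0_lt1 : 0 < entry_bound < 1.
Proof.
have K_ge1 := gain_bound_ge1.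
have KK_gt1 : 1 < 2 * (gain_bound * gain_bound).
  by have := ler_pM (ler01) (ler01) K_ge1 K_ge1; rewrite mulr1; lra.
by rewrite invr_gt0 invf_lt1 (lt_trans ltr01 KK_gt1).
Qed.

Lemma lt_entry_bound e : e < entry_bound -> e * (2 * (gain_bound * gain_bound)) < 1.
Proof.
have [eb_gt0 _] := andP entry_bound_gt0_lt1.
by rewrite -ltr_pdivlMr ?div1r // -invr_gt0.
Qed.

Lemma play_star_stable : stable pi1 pi2 incumbents1 incumbents2 play_star.
Proof.
split; first by split=> t t'; apply: eq_on_seq1.
move=> m1 m2 some_mutant m1_new m2_new.
exists entry_bound; split=> [|e1 e2 e1_range e2_range /= bt focal_bt].
  exact: entry_bound_gt0_lt1.
case: m1 some_mutant m1_new e1_range focal_bt => [m1|] some_mutant m1_new e1_range;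
  case: m2 some_mutant m2_new e2_range => [m2|] some_mutant m2_new e2_range focal_bt.
- have m1_fresh : m1 != dominant_a1 by have := m1_new m1 erefl; rewrite mem_seq1.
  have m2_fresh : m2 != dominant_a2 by have := m2_new m2 erefl; rewrite mem_seq1.
  have /andP[e1_gt0 /lt_entry_bound e1_small] : 0 < e1 < entry_bound by apply: e1_range.
  have /andP[e2_gt0 /lt_entry_bound e2_small] : 0 < e2 < entry_bound by apply: e2_range.
  have [m1_worse|[m2_worse|balanced_bt]] :=
    mutants_outcome m1_fresh m2_fresh e1_gt0 e2_gt0 e1_small e2_small focal_bt.
  + by left; left; exists m1.
  + by left; right; exists m2.
  + by right.
- have m1_fresh : m1 != dominant_a1 by have := m1_new m1 erefl; rewrite mem_seq1.
  have [m1_worse|balanced_bt] := mutant1_outcome m1_fresh focal_bt.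
  + by left; left; exists m1.
  + by right.
- have m2_fresh : m2 != dominant_a2 by have := m2_new m2 erefl; rewrite mem_seq1.
  have [m2_worse|balanced_bt] := mutant2_outcome m2_fresh focal_bt.
  + by left; right; exists m2.
  + by right.
- by case: some_mutant.
Qed.

Lemma valid_incumbents (th : Theta R A1 A2) : valid_dist (Dist [:: th] (fun _ => 1)).
Proof. by split=> //; split=> [t _|]; rewrite ?big_seq1 ?ltr01. Qed.

Lemma dirac_profile_stable : stable_profile pi1 pi2 (dirac R a1, dirac R a2).
Proof.
exists incumbents1, incumbents2, play_star.
do 2 (split; first exact: valid_incumbents).
split; first by move=> t1 t2; rewrite !mem_seq1 => /eqP -> /eqP ->; exact: nash_dominant.
split; first exact: play_star_stable.
by move=> [x1 x2]; rewrite /aggregate /= !big_seq1 !mul1r.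
Qed.

End Stability.

Theorem mainTheorem4 (R : realFieldType) (A1 A2 : finType)
    (pi1 pi2 : A1 * A2 -> R) (a1 : A1) (a2 : A2) :
  pareto_efficient pi1 pi2 (dirac R a1, dirac R a2) ->
  strict_nash pi1 pi2 (a1, a2) ->
  stable_profile pi1 pi2 (dirac R a1, dirac R a2).
Proof. exact: dirac_profile_stable. Qed.
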